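(* Assume (MA1) holds and let $\{x_k\}$ be generated by Algorithm R2N. Suppose the algorithm generates infinitely many successful iterations, that there is $(f+h)_{\rm low}\in\mathbb{R}$ with $(f+h)(x_k)\ge(f+h)_{\rm low}$ for all $k$, and that there is $\alpha>0$ with $\nu_k^{-1/2}\xi_{cp}(x_k,\nu_k^{-1})^{1/2}\ge\alpha$ for all $k\in\mathbb{N}$. Then $\{x_k\}$ is a Cauchy sequence and hence converges.
   Context: Setting: $f:\mathbb{R}^n\to\mathbb{R}$ continuously differentiable, $h:\mathbb{R}^n\to\mathbb{R}\cup\{+\infty\}$ proper lower semicontinuous; $\partial$ = limiting subdifferential; $\|\cdot\|$ Euclidean norm on vectors, spectral norm on matrices. A function $g$ is prox-bounded if there exist $\nu>0$, $x$ with $\inf_y g(y)+\frac1{2\nu}\|y-x\|^2>-\infty$; its threshold is the supremum of such $\nu$. For each $x$, $B(x)$ is symmetric and $\psi(\cdot;x):\mathbb{R}^n\to\mathbb{R}\cup\{+\infty\}$. $\varphi(s;x)=f(x)+\nabla f(x)^Ts+\tfrac12s^TB(x)s$, $m(s;x,\sigma)=\varphi(s;x)+\tfrac12\sigma\|s\|^2+\psi(s;x)$; $\varphi_{cp}(s;x)=f(x)+\nabla f(x)^Ts$, $m_{cp}(s;x,\nu^{-1})=\varphi_{cp}(s;x)+\tfrac12\nu^{-1}\|s\|^2+\psi(s;x)$, $P_{cp}(x,\nu^{-1})=\operatorname{argmin}_s m_{cp}(s;x,\nu^{-1})$, and for $s_{cp}\in P_{cp}(x,\nu^{-1})$, $\xi_{cp}(x,\nu^{-1})=f(x)+h(x)-(\varphi_{cp}(s_{cp};x)+\psi(s_{cp};x))$.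 (MA1): for every $x$, $\psi(\cdot;x)$ is proper, lsc, prox-bounded with threshold $\lambda_x$, $\psi(0;x)=h(x)$, $\partial\psi(0;x)=\partial h(x)$. Algorithm R2N: constants $0<\theta_1<1<\theta_2$, $0<\eta_1\le\eta_2<1$, $0<\gamma_3\le1<\gamma_1\le\gamma_2$; $x_0$ with $h(x_0)<\infty$, $\sigma_0>0$. For $k=0,1,\dots$: choose symmetric $B_k=B(x_k)$; set $\nu_k=\theta_1/(\|B_k\|+\sigma_k)$; compute $s_{k,cp}\in P_{cp}(x_k,\nu_k^{-1})$ and $\xi_{cp}(x_k,\nu_k^{-1})$ (using $s_{k,cp}$); compute $s_k$ with $m(s_k;x_k,\sigma_k)\le m(s_{k,cp};x_k,\sigma_k)$; if $\|s_k\|>\theta_2\|s_{k,cp}\|$, reset $s_k=s_{k,cp}$; compute $\rho_k=\frac{(f+h)(x_k)-(f+h)(x_k+s_k)}{\varphi(0;x_k)+\psi(0;x_k)-\varphi(s_k;x_k)-\psi(s_k;x_k)}$ (extended arithmetic: $\pm\infty\cdot0=0$, $(\pm\infty)/(\pm\infty)=0$); if $\rho_k\ge\eta_1$ set $x_{k+1}=x_k+s_k$, else $x_{k+1}=x_k$; choose $\sigma_{k+1}\in[\gamma_3\sigma_k,\sigma_k]$ if $\rho_k\ge\eta_2$ (very successful), $\sigma_{k+1}\in[\sigma_k,\gamma_1\sigma_k]$ if $\eta_1\le\rho_k<\eta_2$, $\sigma_{k+1}\in[\gamma_1\sigma_k,\gamma_2\sigma_k]$ if $\rho_k<\eta_1$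 (unsuccessful). $\mathcal S=\{k:\rho_k\ge\eta_1\}$ (successful iterations), $\mathcal S_k=\{i\in\mathcal S:i\le k\}$, $\mathcal U=\mathbb N\setminus\mathcal S$, $\mathcal U_k=\{i\in\mathcal U:i\le k\}$. *)

From HB Require Import structures.
From mathcomp Require Import all_boot all_order all_algebra.
From mathcomp Require Import all_classical all_reals all_analysis.
Set Implicit Arguments. Unset Strict Implicit. Unset Printing Implicit Defensive.
Import Order.TTheory GRing.Theory Num.Theory.
Import numFieldNormedType.Exports.
Local Open Scope classical_set_scope.
Local Open Scope ring_scope.

Section R2N.
Variables (R : realType) (n : nat).
Notation vec := 'cV[R]_n.

Definition enorm (v : vec) : R := Num.sqrt (\sum_(i < n) v i 0 ^+ 2).

Definition dotp (u v : vec) : R := \sum_(i < n) u i 0 * v i 0.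

Definition specnorm (A : 'M[R]_n) : R :=
  sup [set enorm (A *m v) | v in [set v : vec | enorm v <= 1]].

Definition grad (f : vec -> R) (x : vec) : vec :=
  \col_(i < n) 'D_(delta_mx i 0 : vec) f x.

Definition C1 (f : vec -> R) : Prop :=
  (forall x, differentiable f x) /\ continuous (grad f).

Definition proper_fun (g : vec -> \bar R) : Prop :=
  (forall x, g x != -oo%E) /\ (exists x, g x != +oo%E).

Definition prox_bounded (g : vec -> \bar R) : Prop :=
  exists nu : R, 0 < nu /\ exists x : vec,
    (-oo < ereal_inf [set (g y + (enorm (y - x) ^+ 2 / (2 * nu))%R%:E)%E | y in [set: vec]])%E.

(* Frechet (regular) subdifferential, epsilon-delta form of
   liminf_{y -> x, y <> x} (g y - g x - v^T (y - x)) / ||y - x|| >= 0 *)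
Definition frechet_subgrad (g : vec -> \bar R) (x v : vec) : Prop :=
  g x \is a fin_num /\
  forall eps : R, 0 < eps -> exists2 delta : R, 0 < delta &
    forall y : vec, enorm (y - x) < delta ->
      (g x + (dotp v (y - x) - eps * enorm (y - x))%R%:E <= g y)%E.

Definition limiting_subgrad (g : vec -> \bar R) (x v : vec) : Prop :=
  g x \is a fin_num /\
  exists (xs vs : nat -> vec),
    (forall k, frechet_subgrad g (xs k) (vs k)) /\
    (forall eps : R, 0 < eps -> exists N : nat, forall k, (N <= k)%N ->
       [/\ enorm (xs k - x) < eps,
           `| fine (g (xs k)) - fine (g x) | < eps &
           enorm (vs k - v) < eps]).

(* Assumption (MA1) on the model psi : x -> (s -> psi(s; x)) *)
Definition MA1 (h : vec -> \bar R) (psi : vec -> vec -> \bar R) : Prop :=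
  forall x : vec,
    [/\ proper_fun (psi x), lower_semicontinuous (psi x), prox_bounded (psi x),
        psi x 0 = h x &
        forall v, limiting_subgrad (psi x) 0 v <-> limiting_subgrad h x v].

Definition phi (f : vec -> R) (B : vec -> 'M[R]_n) (x s : vec) : R :=
  f x + dotp (grad f x) s + 2^-1 * dotp s (B x *m s).
Definition mmodel f B (psi : vec -> vec -> \bar R) (x : vec) (sigma : R) (s : vec) : \bar R :=
  ((phi f B x s + 2^-1 * sigma * enorm s ^+ 2)%R%:E + psi x s)%E.
Definition phi_cp (f : vec -> R) (x s : vec) : R := f x + dotp (grad f x) s.
(* m_cp(s; x, nuinv) where nuinv stands for nu^{-1} *)
Definition mcp f (psi : vec -> vec -> \bar R) (x : vec) (nuinv : R) (s : vec) : \bar R :=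
  ((phi_cp f x s + 2^-1 * nuinv * enorm s ^+ 2)%R%:E + psi x s)%E.
(* xi_cp(x, nu^{-1}) computed with the chosen s_cp *)
Definition xi_cp f (h : vec -> \bar R) (psi : vec -> vec -> \bar R) (x scp : vec) : \bar R :=
  ((f x)%:E + h x - ((phi_cp f x scp)%:E + psi x scp))%E.

(* extended division with the conventions  (+-oo) * 0 = 0  and  (+-oo)/(+-oo) = 0
   (a / b := a * b^{-1}, b^{-1} := 0 for b = +-oo, and r/0 = r * 0^-1 = 0 as in MathComp) *)
Definition ediv (a b : \bar R) : \bar R :=
  match b with
  | r%:E => (a * (r^-1)%R%:E)%E
  | _ => 0%E
  end.

Definition rho f B (h : vec -> \bar R) (psi : vec -> vec -> \bar R) (x s : vec) : \bar R :=
  ediv ((f x)%:E + h x - ((f (x + s)%R)%:E + h (x + s)%R))%E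
       ((phi f B x 0%R)%:E + psi x 0%R - (phi f B x s)%:E - psi x s)%E.

(* A run of Algorithm R2N: iterates x, regularization parameters sigma,
   Cauchy steps scp, trial steps st (before the possible reset) and steps s. *)
Definition R2N_run (f : vec -> R) (h : vec -> \bar R) (B : vec -> 'M[R]_n)
    (psi : vec -> vec -> \bar R)
    (theta1 theta2 eta1 eta2 gamma1 gamma2 gamma3 : R)
    (x : nat -> vec) (sigma : nat -> R) (scp st s : nat -> vec) : Prop :=
  (0 < theta1 < 1) /\ (1 < theta2) /\ (0 < eta1 <= eta2) /\ (eta2 < 1) /\
  (0 < gamma3 <= 1) /\ (1 < gamma1 <= gamma2) /\
  [/\ (h (x 0%N) < +oo)%E, 0 < sigma 0%N &
  forall k : nat,
    let nuk := theta1 / (specnorm (B (x k)) + sigma k) in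
    let rhok := rho f B h psi (x k) (s k) in
    [/\
        (forall t, (mcp f psi (x k) nuk^-1 (scp k) <= mcp f psi (x k) nuk^-1 t)%E),
        (mmodel f B psi (x k) (sigma k) (st k) <= mmodel f B psi (x k) (sigma k) (scp k))%E,
        s k = (if enorm (st k) > theta2 * enorm (scp k) then scp k else st k),
        x k.+1 = (if (eta1%:E <= rhok)%E then x k + s k else x k) &
        (if (eta2%:E <= rhok)%E then gamma3 * sigma k <= sigma k.+1 <= sigma k
         else if (eta1%:E <= rhok)%E then sigma k <= sigma k.+1 <= gamma1 * sigma k
         else gamma1 * sigma k <= sigma k.+1 <= gamma2 * sigma k)]].

End R2N.

From HB Require Import structures.
From mathcomp Require Import all_boot all_order all_algebra.
From mathcomp Require Import all_classical all_reals all_analysis.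
From mathcomp Require Import ring lra.
Set Implicit Arguments. Unset Strict Implicit. Unset Printing Implicit Defensive.
Import Order.TTheory GRing.Theory Num.Theory.
Import numFieldNormedType.Exports.
Local Open Scope classical_set_scope.
Local Open Scope ring_scope.

(* A successful step s_k decreases f + h by at least
   C ||s_k||, C = alpha eta1 (1 - theta1) / (2 theta2): optimality of the
   Cauchy step against s = 0 gives nu^-1 ||s_cp||^2 <= 2 xi_cp, so the model
   decrease is at least (1 - theta1) xi_cp, and the lower bound alpha on
   (nu^-1 xi_cp)^(1/2) turns xi_cp into at least alpha ||s_cp|| / 2, while
   ||s_k|| <= theta2 ||s_cp||.  As f + h is bounded below along the iterates,
   the step lengths are summable, so {x_k} is Cauchy and converges. *)

Section Euclidean.
Variables (R : realType) (n : nat).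
Implicit Types (u v : 'cV[R]_n) (A : 'M[R]_n).

Lemma enorm_ge0 v : 0 <= enorm v.
Proof. exact: sqrtr_ge0. Qed.

Lemma enorm_sqr v : enorm v ^+ 2 = \sum_(i < n) v i 0 ^+ 2.
Proof. by rewrite sqr_sqrtr // sumr_ge0 // => i _; rewrite sqr_ge0. Qed.

Lemma enorm0 : enorm (0 : 'cV[R]_n) = 0.
Proof. by rewrite /enorm big1 ?sqrtr0 // => i _; rewrite mxE expr0n. Qed.

Lemma dotpv0 u : dotp u 0 = 0.
Proof. by rewrite /dotp big1 // => i _; rewrite mxE mulr0. Qed.

Lemma normr_coord_le_enorm v i : `|v i 0| <= enorm v.
Proof.
have sqr_sum_ge0 : 0 <= \sum_(j < n) v j 0 ^+ 2 by apply: sumr_ge0 => j _; exact: sqr_ge0.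
rewrite -sqrtr_sqr /enorm ler_sqrt // (bigD1 i) //= lerDl.
by apply: sumr_ge0 => j _; exact: sqr_ge0.
Qed.

Lemma enorm_eq0 v : enorm v = 0 -> v = 0.
Proof.
move=> v0; apply/matrixP => i j; rewrite (ord1 j) mxE.
by apply/normr0_eq0/eqP; rewrite eq_le normr_ge0 -v0 normr_coord_le_enorm.
Qed.

Lemma enormZ (c : R) v : enorm (c *: v) = `|c| * enorm v.
Proof.
rewrite /enorm -sqrtr_sqr -sqrtrM ?sqr_ge0 // mulr_sumr.
by congr Num.sqrt; apply: eq_bigr => i _; rewrite mxE exprMn.
Qed.

Lemma enormN v : enorm (- v) = enorm v.
Proof. by rewrite -scaleN1r enormZ normrN1 mul1r. Qed.

Lemma enormB_sym u v : enorm (u - v) = enorm (v - u).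
Proof. by rewrite -enormN opprB. Qed.

Lemma dotp0v v : dotp 0 v = 0.
Proof. by rewrite /dotp big1 // => i _; rewrite mxE mul0r. Qed.

Lemma enorm_lincomb_sqr (a b : R) u v :
  enorm (a *: u + b *: v) ^+ 2 =
    a ^+ 2 * enorm u ^+ 2 + 2 * a * b * dotp u v + b ^+ 2 * enorm v ^+ 2.
Proof.
rewrite !enorm_sqr /dotp !mulr_sumr -!big_split /=.
by apply: eq_bigr => i _; rewrite !mxE; ring.
Qed.

Lemma dotp_le_enorm u v : dotp u v <= enorm u * enorm v.
Proof.
have [/enorm_eq0 ->|u_neq0] := eqVneq (enorm u) 0; first by rewrite dotp0v enorm0 mul0r.
have [/enorm_eq0 ->|v_neq0] := eqVneq (enorm v) 0; first by rewrite dotpv0 enorm0 mulr0.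
have uv_gt0 : 0 < enorm u * enorm v.
  by rewrite mulr_gt0 // lt_neqAle eq_sym ?u_neq0 ?v_neq0 enorm_ge0.
(* | |v| u - |u| v |^2 = 2 |u| |v| (|u| |v| - u.v) *)
have := sqr_ge0 (enorm (enorm v *: u + (- enorm u) *: v)).
rewrite enorm_lincomb_sqr sqrrN => comb_ge0.
rewrite -subr_ge0 -(pmulr_rge0 _ uv_gt0).
lra.
Qed.

Lemma enormD u v : enorm (u + v) <= enorm u + enorm v.
Proof.
rewrite -ler_sqr ?nnegrE ?addr_ge0 ?enorm_ge0 //.
rewrite -[u]scale1r -[v]scale1r enorm_lincomb_sqr !scale1r expr1n !mul1r.
have := dotp_le_enorm u v; lra.
Qed.

Lemma normr_mxentry_le p q (A : 'M[R]_(p, q)) i j : `|A i j| <= `|A|.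
Proof. by rewrite [leRHS]/Num.Def.normr /= mx_normrE (le_bigmax _ _ (i, j)). Qed.

Lemma mx_norm_le_enorm v : `|v| <= enorm v.
Proof.
rewrite [leLHS]/Num.Def.normr /= mx_normrE; apply: bigmax_le => [|[i j] _] /=.
  exact: enorm_ge0.
by rewrite (ord1 j) normr_coord_le_enorm.
Qed.

Lemma enorm_le_coord_bound (M : R) v :
  0 <= M -> (forall i, `|v i 0| <= M) -> enorm v <= Num.sqrt n%:R * M.
Proof.
move=> M_ge0 vM; rewrite -[M]ger0_norm // -sqrtr_sqr -sqrtrM ?ler0n //.
rewrite /enorm ler_sqrt ?mulr_ge0 ?sqr_ge0 ?ler0n // mulr_natl.
rewrite -[n in _ *+ n]card_ord -sumr_const; apply: ler_sum => i _.
by rewrite -real_normK ?num_real // ler_sqr ?nnegrE.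
Qed.

Lemma enorm_le_mx_norm v : enorm v <= Num.sqrt n%:R * `|v|.
Proof. by apply: enorm_le_coord_bound => // i; exact: normr_mxentry_le. Qed.

Lemma specnorm_ubound A :
  has_ubound [set enorm (A *m v) | v in [set v | enorm v <= 1]].
Proof.
exists (Num.sqrt n%:R * (n%:R * `|A|)) => _ [v /= v_le1 <-].
apply: enorm_le_coord_bound => [|i]; first by rewrite mulr_ge0.
rewrite mxE mulr_natl -[n in _ *+ n]card_ord -sumr_const.
apply: le_trans (ler_norm_sum _ _ _) _; apply: ler_sum => j _.
rewrite normrM -[leRHS]mulr1 ler_pM ?normr_mxentry_le //.
exact: le_trans (normr_coord_le_enorm v j) v_le1.
Qed.

Lemma specnorm_ge0 A : 0 <= specnorm A.
Proof.
apply: ub_le_sup; first exact: specnorm_ubound.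
by exists 0; rewrite /= ?mulmx0 enorm0.
Qed.

Lemma enorm_mulmx_le A v : enorm (A *m v) <= specnorm A * enorm v.
Proof.
have [/enorm_eq0 ->|v_neq0] := eqVneq (enorm v) 0; first by rewrite mulmx0 enorm0 mulr0.
have v_gt0 : 0 < enorm v by rewrite lt_neqAle eq_sym v_neq0 enorm_ge0.
rewrite -ler_pdivrMr // mulrC -[(enorm v)^-1]ger0_norm ?invr_ge0 ?enorm_ge0 //.
rewrite -enormZ scalemxAr; apply: ub_le_sup; first exact: specnorm_ubound.
by exists ((enorm v)^-1 *: v); rewrite //= enormZ ger0_norm ?invr_ge0 ?enorm_ge0 ?mulVf.
Qed.

Lemma dotp_mulmx_le A v : dotp v (A *m v) <= specnorm A * enorm v ^+ 2.
Proof.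
apply: le_trans (dotp_le_enorm _ _) _.
by rewrite mulrC expr2 mulrA ler_wpM2r ?enorm_ge0 ?enorm_mulmx_le.
Qed.

End Euclidean.

Section EnormSequences.
Variables (R : realType) (n : nat).

Definition enorm_cauchyseq (x : nat -> 'cV[R]_n) :=
  forall eps : R, 0 < eps -> exists N : nat, forall p q : nat,
    (N <= p)%N -> (N <= q)%N -> enorm (x p - x q) < eps.

Definition enorm_cvg_to (x : nat -> 'cV[R]_n) (l : 'cV[R]_n) :=
  forall eps : R, 0 < eps ->
    exists N : nat, forall k : nat, (N <= k)%N -> enorm (x k - l) < eps.

Lemma enorm_cauchyseq_cvg x : enorm_cauchyseq x -> exists l, enorm_cvg_to x l.
Proof.
move=> x_cauchy.
have x_cvg : cvg (x @ \oo).
  apply: cauchy_cvg; apply: cauchy_exP => e e_gt0.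
  have [N xN] := x_cauchy e e_gt0.
  exists (x N), N => // k /= Nk; rewrite -ball_normE /ball_ /=.
  exact: le_lt_trans (mx_norm_le_enorm _) (xN N k (leqnn N) Nk).
exists (lim (x @ \oo)); move=> eps eps_gt0.
have sqrtn_ge0 : 0 <= Num.sqrt n%:R :> R := sqrtr_ge0 _.
have e_gt0 : 0 < eps / (Num.sqrt n%:R + 1) by rewrite divr_gt0 // ltr_wpDl.
have /cvgrPdistC_lt /(_ _ e_gt0) [N _ xN] := x_cvg.
exists N => k /xN x_near; apply: le_lt_trans (enorm_le_mx_norm _) _.
apply: le_lt_trans (ler_wpM2l sqrtn_ge0 (ltW x_near)) _.
rewrite mulrA ltr_pdivrMr ?ltr_wpDl //; lra.
Qed.

Section SufficientDescent.
Variables (x : nat -> 'cV[R]_n) (F : nat -> R) (C : R).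
Hypotheses (C_gt0 : 0 < C)
  (descent : forall k, C * enorm (x k.+1 - x k) <= F k - F k.+1).

Lemma descent_nonincreasing : nonincreasing_seq F.
Proof.
apply/nonincreasing_seqP => k; rewrite -subr_ge0.
by apply: le_trans (descent k); rewrite mulr_ge0 ?enorm_ge0 ?ltW.
Qed.

Lemma descent_telescope p m : C * enorm (x (m + p) - x p) <= F p - F (m + p).
Proof.
elim: m => [|m IHm]; first by rewrite add0n !subrr enorm0 mulr0.
have := descent (m + p); rewrite addSn.
have := enormD (x (m + p).+1 - x (m + p)) (x (m + p) - x p).
rewrite addrA subrK => tri step.
apply: le_trans (ler_wpM2l (ltW C_gt0) tri) _; lra.
Qed.

Lemma descent_cauchyseq : has_lbound (range F) -> enorm_cauchyseq x.
Proof.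
move=> F_lbound eps eps_gt0.
have F_cvg := nonincreasing_cvgn descent_nonincreasing F_lbound.
have e_gt0 : 0 < C * eps / 2 by rewrite !divr_gt0 ?mulr_gt0.
have /cvgrPdist_lt /(_ _ e_gt0) [N _ FN] := F_cvg.
exists N => p q Np Nq.
wlog pq : p q Np Nq / (p <= q)%N => [wlog_pq|].
  by case/orP: (leq_total p q) => ?; [|rewrite enormB_sym]; exact: wlog_pq.
have := descent_telescope p (q - p); rewrite subnK // => tele.
rewrite enormB_sym -(ltr_pM2l C_gt0); apply: le_lt_trans tele _.
by move: (FN p Np) (FN q Nq); rewrite !ltr_distl; lra.
Qed.

End SufficientDescent.

End EnormSequences.

Lemma fin_num_le_addl (R : realType) (r : R) (a b : \bar R) :
  a != -oo%E -> b \is a fin_num -> (r%:E + a <= b)%E -> a \is a fin_num.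
Proof. by case: a => [a| |] //; case: b. Qed.

Section R2NStep.
Variables (R : realType) (n : nat).
Variables (f : 'cV[R]_n -> R) (h : 'cV[R]_n -> \bar R) (B : 'cV[R]_n -> 'M[R]_n)
  (psi : 'cV[R]_n -> 'cV[R]_n -> \bar R).
Variables (x : 'cV[R]_n) (sigma theta1 theta2 eta1 alpha : R) (scp st s : 'cV[R]_n).
Hypotheses (theta1_gt0 : 0 < theta1) (theta1_lt1 : theta1 < 1)
  (theta2_gt1 : 1 < theta2) (eta1_gt0 : 0 < eta1) (alpha_gt0 : 0 < alpha)
  (sigma_gt0 : 0 < sigma).
Hypotheses (h_neq_ninfty : forall y, h y != -oo%E)
  (psi_neq_ninfty : forall t, psi x t != -oo%E) (psi_x0 : psi x 0 = h x)
  (hx_fin : h x \is a fin_num).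

Let nu := theta1 / (specnorm (B x) + sigma).

Hypotheses
  (scp_min : forall t, (mcp f psi x nu^-1 scp <= mcp f psi x nu^-1 t)%E)
  (st_model_le : (mmodel f B psi x sigma st <= mmodel f B psi x sigma scp)%E)
  (s_def : s = if enorm st > theta2 * enorm scp then scp else st)
  (alpha_le : (alpha%:E <= (Num.sqrt nu^-1)%:E * sqrte (xi_cp f h psi x scp))%E)
  (successful : (eta1%:E <= rho f B h psi x s)%E).

Lemma enorm_step_le : enorm s <= theta2 * enorm scp.
Proof.
rewrite s_def; case: ifPn => [_|]; last by rewrite -leNgt.
by rewrite ler_peMl ?enorm_ge0 ?ltW.
Qed.

Lemma mmodel_step_le : (mmodel f B psi x sigma s <= mmodel f B psi x sigma scp)%E.
Proof. by rewrite s_def; case: ifP. Qed.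

Lemma mcp_zero : mcp f psi x nu^-1 0 = ((f x)%:E + h x)%E.
Proof. by rewrite /mcp /phi_cp dotpv0 enorm0 psi_x0 expr0n /= mulr0 !addr0. Qed.

Lemma psi_scp_fin : psi x scp \is a fin_num.
Proof.
apply: fin_num_le_addl (psi_neq_ninfty scp) _ (scp_min 0).
by rewrite mcp_zero fin_numD hx_fin.
Qed.

Lemma psi_s_fin : psi x s \is a fin_num.
Proof.
apply: fin_num_le_addl (psi_neq_ninfty s) _ mmodel_step_le.
by rewrite fin_numD psi_scp_fin.
Qed.

Let hx := fine (h x).
Let xi := f x + hx - (phi_cp f x scp + fine (psi x scp)).
Let model_decr := f x + hx - phi f B x s - fine (psi x s).

Lemma xi_cpE : xi_cp f h psi x scp = xi%:E.
Proof. by rewrite /xi_cp -(fineK hx_fin) -(fineK psi_scp_fin). Qed.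

Lemma nuinv_enorm_scp_le : nu^-1 * enorm scp ^+ 2 <= 2 * xi.
Proof.
have := scp_min 0; rewrite mcp_zero /mcp -(fineK hx_fin) -(fineK psi_scp_fin).
rewrite -!EFinD lee_fin /xi /hx; lra.
Qed.

Lemma theta1_nuinv : theta1 * nu^-1 = specnorm (B x) + sigma.
Proof. by rewrite invf_div mulrC divfK ?gt_eqF. Qed.

Lemma model_decr_ge : (1 - theta1) * xi <= model_decr.
Proof.
have := mmodel_step_le; rewrite /mmodel -(fineK psi_s_fin) -(fineK psi_scp_fin).
rewrite -!EFinD lee_fin => model_le.
have quad_le := dotp_mulmx_le (B x) scp.
have sigma_s_ge0 : 0 <= sigma * enorm s ^+ 2 by rewrite mulr_ge0 ?sqr_ge0 ?ltW.
have theta1_xi : theta1 * (nu^-1 * enorm scp ^+ 2) <= theta1 * (2 * xi).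
  by rewrite ler_pM2l // nuinv_enorm_scp_le.
rewrite [in X in X <= _]mulrA theta1_nuinv mulrDl in theta1_xi.
move: model_le theta1_xi; rewrite /model_decr /xi /phi /phi_cp; lra.
Qed.

Lemma nuinv_gt0 : 0 < nu^-1.
Proof. by rewrite invr_gt0 divr_gt0 ?ltr_wpDl ?specnorm_ge0. Qed.

Lemma alpha_le_sqrt : alpha <= Num.sqrt nu^-1 * Num.sqrt xi.
Proof. by move: alpha_le; rewrite xi_cpE /= lee_fin. Qed.

Lemma xi_gt0 : 0 < xi.
Proof.
rewrite ltNge; apply/negP => /ler0_sqrtr xi_sqrt0.
by move: alpha_le_sqrt; rewrite xi_sqrt0 mulr0 leNgt alpha_gt0.
Qed.

Lemma alpha_enorm_scp_le : alpha * enorm scp <= 2 * xi.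
Proof.
have alpha_sqr_le : alpha ^+ 2 <= nu^-1 * xi.
  rewrite -(sqr_sqrtr (ltW nuinv_gt0)) -(sqr_sqrtr (ltW xi_gt0)) -exprMn.
  by rewrite ler_sqr ?nnegrE ?mulr_ge0 ?sqrtr_ge0 ?(ltW alpha_gt0) // alpha_le_sqrt.
rewrite -ler_sqr ?nnegrE ?mulr_ge0 ?enorm_ge0 ?(ltW alpha_gt0) ?(ltW xi_gt0) //.
have := ler_wpM2r (sqr_ge0 (enorm scp)) alpha_sqr_le.
have := ler_wpM2l (ltW xi_gt0) nuinv_enorm_scp_le.
rewrite !exprMn; nra.
Qed.

Lemma model_decr_gt0 : 0 < model_decr.
Proof.
apply: lt_le_trans model_decr_ge.
by rewrite mulr_gt0 ?xi_gt0 // subr_gt0.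
Qed.

Lemma rho_denomE :
  ((phi f B x 0)%:E + psi x 0 - (phi f B x s)%:E - psi x s)%E = model_decr%:E.
Proof.
rewrite psi_x0 -(fineK hx_fin) -(fineK psi_s_fin) /phi dotpv0 mulmx0 dotpv0.
by rewrite !mulr0 !addr0.
Qed.

Lemma h_step_fin : h (x + s) \is a fin_num.
Proof.
rewrite fin_numE h_neq_ninfty /=; apply/negP => /eqP h_step_oo.
move: successful; rewrite /rho rho_denomE h_step_oo -(fineK hx_fin) /=.
by rewrite -EFinD /= mulNyr gtr0_sg ?invr_gt0 ?model_decr_gt0 // mul1e leeNy_eq.
Qed.

Lemma rho_step_le :
  eta1 * model_decr <= (f x + fine (h x)) - (f (x + s) + fine (h (x + s))).
Proof.
move: successful; rewrite /rho rho_denomE -(fineK hx_fin) -(fineK h_step_fin) /=.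
by rewrite -!EFinD -EFinM lee_fin ler_pdivlMr ?model_decr_gt0.
Qed.

Lemma successful_step_decrease :
  h (x + s) \is a fin_num /\
  alpha * eta1 * (1 - theta1) / (2 * theta2) * enorm s <=
    (f x + fine (h x)) - (f (x + s) + fine (h (x + s))).
Proof.
split; first exact: h_step_fin.
have two_theta2_gt0 : 0 < 2 * theta2 by rewrite mulr_gt0 // (lt_trans ltr01).
have alpha_s_le : alpha * enorm s / (2 * theta2) <= xi.
  rewrite ler_pdivrMr //.
  have := ler_wpM2l (ltW alpha_gt0) enorm_step_le.
  have := ler_wpM2l (ltW (lt_trans ltr01 theta2_gt1)) alpha_enorm_scp_le.
  lra.
apply: le_trans rho_step_le.
have := ler_wpM2l (ltW eta1_gt0) model_decr_ge.
have factor_ge0 : 0 <= eta1 * (1 - theta1) by rewrite mulr_ge0 ?subr_ge0 ?ltW.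
have := ler_wpM2l factor_ge0 alpha_s_le.
lra.
Qed.

End R2NStep.

Section R2NRun.
Variables (R : realType) (n : nat).
Variables (f : 'cV[R]_n -> R) (h : 'cV[R]_n -> \bar R) (B : 'cV[R]_n -> 'M[R]_n)
  (psi : 'cV[R]_n -> 'cV[R]_n -> \bar R)
  (theta1 theta2 eta1 eta2 gamma1 gamma2 gamma3 alpha : R)
  (x : nat -> 'cV[R]_n) (sigma : nat -> R) (scp st s : nat -> 'cV[R]_n).
Hypotheses (h_proper : proper_fun h) (psi_MA1 : MA1 h psi)
  (run : R2N_run f h B psi theta1 theta2 eta1 eta2 gamma1 gamma2 gamma3 x sigma scp st s)
  (alpha_gt0 : 0 < alpha)
  (alpha_le : forall k : nat,
     let nuk := theta1 / (specnorm (B (x k)) + sigma k) in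
     (alpha%:E <= (Num.sqrt nuk^-1)%:E * sqrte (xi_cp f h psi (x k) (scp k)))%E).

Let F k := f (x k) + fine (h (x k)).
Let C := alpha * eta1 * (1 - theta1) / (2 * theta2).

Lemma R2N_step_decrease k : h (x k) \is a fin_num -> 0 < sigma k ->
  h (x k.+1) \is a fin_num /\ C * enorm (x k.+1 - x k) <= F k - F k.+1.
Proof.
move=> hk_fin sigmak_gt0.
case: run => /andP[theta1_gt0 theta1_lt1] [theta2_gt1 [/andP[eta1_gt0 _]]].
move=> [_ [_ [_ [_ _ step]]]].
case: (step k) => scp_min st_le s_def x_next _; rewrite /F x_next.
case: ifP => [success|_]; last by rewrite !subrr enorm0 mulr0.
case: (psi_MA1 (x k)) => [[psi_proper _] _ _ psi_x0 _].
rewrite addrAC subrr add0r.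
exact: successful_step_decrease theta1_gt0 theta1_lt1 theta2_gt1 eta1_gt0
  alpha_gt0 sigmak_gt0 h_proper.1 psi_proper psi_x0 hk_fin scp_min st_le s_def
  (alpha_le k) success.
Qed.

Lemma R2N_sigma_gt0 k : 0 < sigma k -> 0 < sigma k.+1.
Proof.
case: run => _ [_ [_ [_ [/andP[gamma3_gt0 _] [/andP[gamma1_gt1 _] [_ _ step]]]]]].
move=> sigmak_gt0; case: (step k) => _ _ _ _.
have gamma1_gt0 : 0 < gamma1 by apply: lt_trans gamma1_gt1.
by do 2?case: ifP => _; case/andP => + _; apply: lt_le_trans; rewrite ?mulr_gt0.
Qed.

Lemma R2N_invariant k : h (x k) \is a fin_num /\ 0 < sigma k.
Proof.
elim: k => [|k [hk_fin sigmak_gt0]].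
  case: run => _ [_ [_ [_ [_ [_ [hx0_lt sigma0_gt0 _]]]]]]; split => //.
  by rewrite fin_numE h_proper.1 lt_eqF.
by split; [exact: (R2N_step_decrease hk_fin sigmak_gt0).1 | exact: R2N_sigma_gt0].
Qed.

Lemma R2N_cauchyseq (fh_low : R) :
  (forall k, (fh_low%:E <= (f (x k))%:E + h (x k))%E) -> enorm_cauchyseq x.
Proof.
move=> lower.
have C_gt0 : 0 < C.
  case: run => /andP[theta1_gt0 theta1_lt1] [theta2_gt1 [/andP[eta1_gt0 _] _]].
  have theta2_gt0 : 0 < theta2 := lt_trans ltr01 theta2_gt1.
  by rewrite /C !(mulr_gt0, invr_gt0, subr_gt0).
apply: (@descent_cauchyseq _ _ _ F C C_gt0).
  move=> k; have [hk_fin sigmak_gt0] := R2N_invariant k.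
  exact: (R2N_step_decrease hk_fin sigmak_gt0).2.
exists fh_low => _ [k _ <-].
by move: (lower k); rewrite /F -(fineK (R2N_invariant k).1) -EFinD lee_fin.
Qed.

End R2NRun.

Theorem lemma5p2 (R : realType) (n : nat)
  (f : 'cV[R]_n -> R) (h : 'cV[R]_n -> \bar R) (B : 'cV[R]_n -> 'M[R]_n)
  (psi : 'cV[R]_n -> 'cV[R]_n -> \bar R)
  (theta1 theta2 eta1 eta2 gamma1 gamma2 gamma3 : R)
  (x : nat -> 'cV[R]_n) (sigma : nat -> R) (scp st s : nat -> 'cV[R]_n)
  (fh_low alpha : R) :
  C1 f -> proper_fun h -> lower_semicontinuous h ->
  (forall y, (B y)^T = B y) ->
  MA1 h psi ->
  R2N_run f h B psi theta1 theta2 eta1 eta2 gamma1 gamma2 gamma3 x sigma scp st s ->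
  (* infinitely many successful iterations *)
  (forall N : nat, exists2 k : nat, (N <= k)%N &
     (eta1%:E <= rho f B h psi (x k) (s k))%E) ->
  (forall k, (fh_low%:E <= (f (x k))%:E + h (x k))%E) ->
  0 < alpha ->
  (forall k : nat,
     let nuk := theta1 / (specnorm (B (x k)) + sigma k) in
     (alpha%:E <= (Num.sqrt (nuk^-1))%:E * sqrte (xi_cp f h psi (x k) (scp k)))%E) ->
  (* {x_k} is Cauchy (Euclidean norm) and converges *)
  (forall eps : R, 0 < eps -> exists N : nat, forall p q : nat,
      (N <= p)%N -> (N <= q)%N -> enorm (x p - x q) < eps) /\
  (exists xstar : 'cV[R]_n, forall eps : R, 0 < eps ->
      exists N : nat, forall k : nat, (N <= k)%N -> enorm (x k - xstar) < eps).
Proof.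
move=> _ h_proper _ _ psi_MA1 run _ lower alpha_gt0 alpha_le.
have x_cauchy := R2N_cauchyseq h_proper psi_MA1 run alpha_gt0 alpha_le lower.
by split; last exact: enorm_cauchyseq_cvg.
Qed.
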